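(* Let $\Phi:\mathbb{R}^n\to\mathbb{R}$ be of class $C^2$, bounded from below, with Hessian $\nabla^2\Phi$ Lipschitz continuous on bounded sets, and let $\alpha,\beta>0$. Consider the system \[ \ddot x(t)+\alpha\dot x(t)+\beta\nabla^2\Phi(x(t))\dot x(t)+\nabla\Phi(x(t))=0, \] written in phase space as $\dot x=v$, $\dot v=-\alpha v-\nabla\Phi(x)-\beta\nabla^2\Phi(x)v$. Let $(x(t),v(t))$ be a solution defined on $[0,\infty)$ that is bounded. Then $\int_0^\infty\|\dot x(t)\|^2dt<\infty$, $\int_0^\infty\|\nabla\Phi(x(t))\|^2dt<\infty$, $v(t)=\dot x(t)\to0$ and $\nabla\Phi(x(t))\to0$ as $t\to\infty$, and consequently $\operatorname{dist}\big((x(t),v(t)),S\big)\to0$, where $S:=\{(x,v)\in\mathbb{R}^n\times\mathbb{R}^n: v=0,\ \nabla\Phi(x)=0\}$. *)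

From HB Require Import structures.
From mathcomp Require Import all_boot all_order all_algebra.
From mathcomp Require Import all_classical all_reals all_analysis.
Set Implicit Arguments. Unset Strict Implicit. Unset Printing Implicit Defensive.
Import Order.TTheory GRing.Theory Num.Theory.
Import numFieldNormedType.Exports.
Local Open Scope classical_set_scope.
Local Open Scope ring_scope.

Definition dotv (R : realType) (n : nat) (u w : 'rV[R]_n) : R :=
  \sum_(i < n) u ord0 i * w ord0 i.
Definition sqnorm (R : realType) (n : nat) (u : 'rV[R]_n) : R := dotv u u.
Definition enorm (R : realType) (n : nat) (u : 'rV[R]_n) : R :=
  Num.sqrt (sqnorm u).

Definition is_gradient (R : realType) (n : nat)
  (Phi : 'rV[R]_n -> R) (G : 'rV[R]_n -> 'rV[R]_n) : Prop :=
  forall y, differentiable Phi y /\ forall h, 'd Phi y h = dotv h (G y).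

(* H is the Hessian of Phi (= Jacobian of its gradient G): G is
   differentiable everywhere with differential h |-> H y h (acting on the
   row vector h as h *m (H y)^T, i.e. the column-vector product (H y) h). *)
Definition is_hessian (R : realType) (n : nat)
  (G : 'rV[R]_n -> 'rV[R]_n) (H : 'rV[R]_n -> 'M[R]_n) : Prop :=
  forall y, differentiable G y /\ forall h, 'd G y h = h *m (H y)^T.

Definition lipschitz_on_bounded (R : realType) (n : nat)
  (H : 'rV[R]_n -> 'M[R]_n) : Prop :=
  forall M : R, exists L : R, forall y z : 'rV[R]_n,
    enorm y <= M -> enorm z <= M -> `|H y - H z| <= L * enorm (y - z).

(* dist((x,v), S) with S = {(y,w) : w = 0, G y = 0}, Euclidean norm on
   R^n x R^n. *)
Definition distS (R : realType) (n : nat) (G : 'rV[R]_n -> 'rV[R]_n)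
  (x v : 'rV[R]_n) : R :=
  inf [set Num.sqrt (sqnorm (x - y) + sqnorm v) | y in [set y | G y = 0]].

From HB Require Import structures.
From mathcomp Require Import all_boot all_order all_algebra.
From mathcomp Require Import all_classical all_reals all_analysis.
From mathcomp Require Import ring lra measurable_realfun.
Import Order.TTheory GRing.Theory Num.Theory.
Import numFieldNormedType.Exports.
Local Open Scope classical_set_scope.
Local Open Scope ring_scope.
Set Implicit Arguments. Unset Strict Implicit. Unset Printing Implicit Defensive.

(* The energy E = (1 + alpha beta) Phi(x) + |v + beta grad Phi(x)|^2 / 2 is bounded below and
   satisfies E' = - alpha |v|^2 - beta |grad Phi(x)|^2, so both squared norms are integrable and
   E converges.  Along a bounded trajectory the Hessian is bounded, so |v|^2 and
   |grad Phi(x)|^2 have bounded derivatives, and a Barbalat-type argument forces them to 0.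
   Finally every cluster point of x is critical by continuity of grad Phi, which gives the
   distance to S. *)

Section RowVectors.
Variables (R : realType) (n : nat).
Implicit Types (u w z : 'rV[R]_n) (k : R).

Lemma dotvC u w : dotv u w = dotv w u.
Proof. by apply: eq_bigr => i _; rewrite mulrC. Qed.

Lemma dotvDl u w z : dotv (u + w) z = dotv u z + dotv w z.
Proof. by rewrite /dotv -big_split; apply: eq_bigr => i _; rewrite mxE mulrDl. Qed.

Lemma dotvZl k u w : dotv (k *: u) w = k * dotv u w.
Proof. by rewrite /dotv mulr_sumr; apply: eq_bigr => i _; rewrite mxE mulrA. Qed.

Lemma dotvNl u w : dotv (- u) w = - dotv u w.
Proof. by rewrite -scaleN1r dotvZl mulN1r. Qed.

Lemma dotvBl u w z : dotv (u - w) z = dotv u z - dotv w z.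
Proof. by rewrite dotvDl dotvNl. Qed.

Lemma dotvDr u w z : dotv z (u + w) = dotv z u + dotv z w.
Proof. by rewrite dotvC dotvDl !(dotvC z). Qed.

Lemma dotvZr k u w : dotv w (k *: u) = k * dotv w u.
Proof. by rewrite dotvC dotvZl dotvC. Qed.

Lemma dotvNr u w : dotv w (- u) = - dotv w u.
Proof. by rewrite dotvC dotvNl dotvC. Qed.

Lemma dotvBr u w z : dotv z (u - w) = dotv z u - dotv z w.
Proof. by rewrite dotvDr dotvNr. Qed.

Lemma sqnorm_ge0 u : 0 <= sqnorm u.
Proof. by apply: sumr_ge0 => i _; rewrite -expr2 sqr_ge0. Qed.

Lemma enorm_ge0 u : 0 <= enorm u.
Proof. exact: sqrtr_ge0. Qed.

(* [`|u|] is the sup norm of the entries, the canonical norm of ['rV[R]_n]. *)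
Lemma mx_entry_le_norm m p (A : 'M[R]_(m, p)) i j : `|A i j| <= `|A|.
Proof.
rewrite [leRHS]/Num.norm /= mx_normrE; apply/bigmax_geP; right => /=.
by exists (i, j).
Qed.

Lemma mx_norm_le m p (A : 'M[R]_(m, p)) (b : R) :
  0 <= b -> (forall i j, `|A i j| <= b) -> `|A| <= b.
Proof. by move=> b0 Ab; rewrite [leLHS]/Num.norm /= mx_normrE; exact: bigmax_le. Qed.

Lemma norm_le_enorm u : `|u| <= enorm u.
Proof.
apply: mx_norm_le; first exact: enorm_ge0.
move=> i j; rewrite (ord1 i) -(ler_pXn2r (n := 2)) ?nnegrE ?enorm_ge0 //.
rewrite real_normK ?num_real // sqr_sqrtr ?sqnorm_ge0 //.
rewrite /sqnorm /dotv (bigD1 j) //= -expr2 lerDl.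
by apply: sumr_ge0 => l _; rewrite -expr2 sqr_ge0.
Qed.

Lemma sqnorm_le u : sqnorm u <= n%:R * `|u| ^+ 2.
Proof.
rewrite (_ : _ * _ = \sum_(i < n) `|u| ^+ 2); last by rewrite sumr_const card_ord mulr_natl.
apply: ler_sum => i _; rewrite -expr2 -real_normK ?num_real //.
by rewrite lerXn2r ?nnegrE // mx_entry_le_norm.
Qed.

Lemma dotv_norm_le u w : `|dotv u w| <= n%:R * (`|u| * `|w|).
Proof.
rewrite (_ : _ * _ = \sum_(i < n) (`|u| * `|w|)); last by rewrite sumr_const card_ord mulr_natl.
apply: le_trans (ler_norm_sum _ _ _) _; apply: ler_sum => i _.
by rewrite normrM; apply: ler_pM => //; exact: mx_entry_le_norm.
Qed.

Lemma mulmx_trmx_norm_le u (A : 'M[R]_n) : `|u *m A^T| <= n%:R * (`|u| * `|A|).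
Proof.
apply: mx_norm_le; first by rewrite !mulr_ge0.
move=> i j; rewrite mxE (_ : _ * _ = \sum_(l < n) (`|u| * `|A|)); last first.
  by rewrite sumr_const card_ord mulr_natl.
apply: le_trans (ler_norm_sum _ _ _) _; apply: ler_sum => l _.
by rewrite normrM mxE; apply: ler_pM => //; exact: mx_entry_le_norm.
Qed.

End RowVectors.

Lemma is_derive_comp_diff (R : realType) (U W : normedModType R) (f : R -> U)
    (g : U -> W) (t : R) (df : U) :
  is_derive t 1 f df -> differentiable g (f t) ->
  is_derive t 1 (g \o f) ('d g (f t) df).
Proof.
move=> [fd <-] gd; have fdf : differentiable f t by apply/derivable1_diffP.
have gfd : differentiable (g \o f) t by apply: differentiable_comp.
apply: DeriveDef; first by apply/derivable1_diffP.
by rewrite deriveE // diff_comp //= deriveE.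
Qed.

Lemma within_continuous_itvcy_of_derive (R : realType) (V : normedModType R) (u du : R -> V) :
  (forall t : R, 0 < t -> is_derive t 1 u (du t)) -> u @ at_right 0 --> u 0 ->
  {within `[0, +oo[, continuous u}.
Proof.
move=> ud u0; apply: derivable_oy_Rcontinuous_within_itvcy; split => //.
by move=> t; rewrite in_itv /= andbT => t0; case: (ud t t0).
Qed.

Section VectorCalculus.
Variables (R : realType) (n : nat).

Lemma is_derive_entry (f : R -> 'rV[R]_n) (t : R) (df : 'rV[R]_n) (i : 'I_n) :
  is_derive t 1 f df -> is_derive t 1 (fun s => f s ord0 i) (df ord0 i).
Proof.
move=> fd; pose g (u : 'rV[R]_n) : R := u ord0 i.
have glin : linear g by move=> a u w; rewrite /g !mxE.
pose gL : {linear 'rV[R]_n -> R} := HB.pack g (GRing.isLinear.Build _ _ _ _ _ glin).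
have gc : continuous gL by apply: coord_continuous.
by have := is_derive_comp_diff fd (linear_differentiable (f t) gc); rewrite diff_lin.
Qed.

Lemma is_derive_dotv (f g : R -> 'rV[R]_n) (t : R) (df dg : 'rV[R]_n) :
  is_derive t 1 f df -> is_derive t 1 g dg ->
  is_derive t 1 (fun s => dotv (f s) (g s)) (dotv df (g t) + dotv (f t) dg).
Proof.
move=> fd gd.
have -> : (fun s => dotv (f s) (g s)) = \sum_(i < n) (fun s => f s ord0 i * g s ord0 i).
  by apply/funext => s; rewrite /dotv fct_sumE.
apply: is_derive_eq.
  apply: is_derive_sum => i.
  exact: is_deriveM (is_derive_entry i fd) (is_derive_entry i gd).
by rewrite /dotv -big_split; apply: eq_bigr => i _ /=; rewrite /GRing.scale /=; ring.
Qed.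

Lemma cvg_dotv (T : Type) (F : set_system T) (FF : Filter F) (f g : T -> 'rV[R]_n)
    (a b : 'rV[R]_n) :
  f @ F --> a -> g @ F --> b -> (fun s => dotv (f s) (g s)) @ F --> dotv a b.
Proof.
move=> fa gb.
have entry_cvg (h : T -> 'rV[R]_n) (c : 'rV[R]_n) (i : 'I_n) :
    h @ F --> c -> (fun s => h s ord0 i) @ F --> c ord0 i.
  move=> hc; have ic : (fun M : 'rV[R]_n => M ord0 i) @ c --> c ord0 i.
    exact: coord_continuous.
  exact: cvg_comp hc ic.
have -> : (fun s => dotv (f s) (g s)) = \sum_(i < n) (fun s => f s ord0 i * g s ord0 i).
  by apply/funext => s; rewrite /dotv fct_sumE.
rewrite /dotv; elim/big_ind2 : _ => //; first exact: cvg_cst.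
  by move=> u1 l1 u2 l2; exact: cvgD.
by move=> i _; apply: cvgM; exact: entry_cvg.
Qed.

Lemma within_continuous_dotv (A : set R) (f g : R -> 'rV[R]_n) :
  {within A, continuous f} -> {within A, continuous g} ->
  {within A, continuous (fun s => dotv (f s) (g s))}.
Proof. by move=> fc gc t; exact: cvg_dotv (fc t) (gc t). Qed.

Lemma sqnorm_cvg0 (T : Type) (F : set_system T) (FF : Filter F) (u : T -> 'rV[R]_n) :
  (fun s => sqnorm (u s)) @ F --> 0 -> u @ F --> (0 : 'rV[R]_n).
Proof.
move=> u0; apply/cvgrPdist_lt => e e0.
near=> s.
have : `|0 - sqnorm (u s)| < e ^+ 2.
  by near: s; exact: (cvgrPdist_lt _ _).1 u0 _ (exprn_gt0 2 e0).
rewrite !sub0r !normrN ger0_norm ?sqnorm_ge0 // => us.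
apply: le_lt_trans (norm_le_enorm _) _.
by rewrite -(ger0_norm (ltW e0)) -sqrtr_sqr /enorm ltr_sqrt // exprn_gt0.
Unshelve. all: by end_near. Qed.

End VectorCalculus.

Section ScalarLyapunov.
Variable R : realType.
Implicit Types (E D f df dE : R -> R).

Lemma MVT_itvcy f df (a b : R) : 0 <= a -> a < b ->
  (forall t : R, 0 < t -> is_derive t 1 f (df t)) -> {within `[0, +oo[, continuous f} ->
  exists2 c, a < c < b & f b - f a = df c * (b - a).
Proof.
move=> a0 ab fd fc.
have fd' : forall t, t \in `]a, b[ -> is_derive t 1 f (df t).
  by move=> t; rewrite in_itv /= => /andP[ta _]; apply: fd; exact: le_lt_trans a0 ta.
have fc' : {within `[a, b], continuous f}.
  apply: continuous_subspaceW fc => t; rewrite /= !in_itv /= => /andP[ta _].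
  by rewrite (le_trans a0 ta).
have [c] := MVT ab fd' fc'; rewrite in_itv /= => acb ->.
by exists c.
Qed.

Lemma derive_le0_nonincreasing E dE (s t : R) : 0 <= s -> s <= t ->
  (forall u : R, 0 < u -> is_derive u 1 E (dE u)) -> (forall u : R, 0 < u -> dE u <= 0) ->
  {within `[0, +oo[, continuous E} -> E t <= E s.
Proof.
move=> s0; rewrite le_eqVlt => /orP[/eqP -> //| st] Ed dE0 Ec.
have [c /andP[sc _] EE] := MVT_itvcy s0 st Ed Ec.
rewrite -subr_le0 EE mulr_le0_ge0 ?subr_ge0 ?(ltW st) //.
by apply: dE0; exact: le_lt_trans s0 sc.
Qed.

Lemma nonincreasing_bounded_cvg E (m : R) :
  (forall s t : R, 0 <= s -> s <= t -> E t <= E s) -> (forall t : R, 0 <= t -> m <= E t) ->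
  exists l : R, E t @[t --> +oo] --> l.
Proof.
move=> Enincr Em; pose P t := - E (Num.max t 0).
have Pndecr : nondecreasing_fun P.
  move=> s t st; rewrite /P lerN2; apply: Enincr; first by rewrite le_max lexx orbT.
  by rewrite ge_max !le_max st lexx !orbT.
have Pub : has_ubound (range P).
  by exists (- m) => _ [t _ <-]; rewrite /P lerN2 Em // le_max lexx orbT.
exists (- sup (range P)); apply: cvg_trans (cvgN (nondecreasing_cvgr Pndecr Pub)).
apply: near_eq_cvg; exists 0; split; first exact: num_real.
by move=> t t0; rewrite /P opprK max_l // ltW.
Qed.

(* The integral of the dissipation [D] is the total decay of the energy [E]. *)
Lemma dissipation_integrable E D f (k l : R) : 0 < k ->
  (forall t : R, 0 <= t -> 0 <= f t) -> (forall t : R, 0 <= t -> k * f t <= D t) ->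
  {within `[0, +oo[, continuous f} -> {within `[0, +oo[, continuous D} ->
  (forall t : R, 0 < t -> is_derive t 1 E (- D t)) -> E @ 0^'+ --> E 0 ->
  E t @[t --> +oo] --> l ->
  (\int[lebesgue_measure]_(t in `[0%R, +oo[) (f t)%:E < +oo)%E.
Proof.
move=> k0 f0 fD fc Dc Ed E0 El.
have D0 (t : R) : 0 <= t -> 0 <= D t.
  move=> t0; apply: (le_trans _ (fD t t0)); apply: mulr_ge0; [exact: ltW | exact: f0].
have NEd (t : R) : 0 < t -> is_derive t 1 (- E) (D t).
  by move=> t0; rewrite -[D t]opprK; exact: is_deriveN (Ed t t0).
have intD : (\int[lebesgue_measure]_(t in `[0%R, +oo[) (D t)%:E = (- l)%:E - (- E 0)%:E)%E.
  apply: ge0_continuous_FTC2y D0 Dc (cvgN El) _ (cvgN E0) _.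
    by move=> t t0; case: (NEd t t0).
  by move=> t; rewrite in_itv /= andbT => t0; rewrite derive1E; case: (NEd t t0).
have mf : measurable_fun (`[0, +oo[ : set R) f by exact: subspace_continuous_measurable_fun.
have mD : measurable_fun (`[0, +oo[ : set R) D by exact: subspace_continuous_measurable_fun.
apply: (@le_lt_trans _ _ (\int[lebesgue_measure]_(t in `[0%R, +oo[) (k^-1 * D t)%:E)%E).
  apply: ge0_le_integral => //; [ | exact/measurable_EFinP | | ].
  - by move=> t; rewrite /= in_itv /= andbT => t0; rewrite lee_fin f0.
  - exact/measurable_EFinP/measurable_funM.
  - move=> t; rewrite /= in_itv /= andbT => t0.
    by rewrite lee_fin ler_pdivlMl // fD.
under eq_integral do rewrite EFinM.
rewrite ge0_integralZl ?lee_fin ?invr_ge0 ?(ltW k0) //.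
- by rewrite intD -EFinB -EFinM ltry.
- exact/measurable_EFinP.
- by move=> t; rewrite /= in_itv /= andbT => t0; rewrite lee_fin D0.
Qed.

(* Barbalat: if [f] decayed too slowly, an interval of length [h] on which [f >= d/2]
   would make [E] drop by [eps * (d/2) * h] arbitrarily late, contradicting its convergence. *)
Lemma barbalat E dE f df (l eps K : R) : 0 < eps ->
  (forall t : R, 0 < t -> is_derive t 1 E (dE t)) -> {within `[0, +oo[, continuous E} ->
  (forall t : R, 0 < t -> is_derive t 1 f (df t)) -> {within `[0, +oo[, continuous f} ->
  (forall t : R, 0 < t -> `|df t| <= K) ->
  (forall t : R, 0 < t -> dE t <= - (eps * f t)) -> (forall t : R, 0 < t -> 0 <= f t) ->
  E t @[t --> +oo] --> l -> f t @[t --> +oo] --> 0.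
Proof.
move=> eps0 Ed Ec fd fc dfK dEf f0 El; apply/cvgrPdist_lt => d d0.
have K0 : 0 <= K by apply: le_trans (dfK 1 ltr01).
pose h := d / (2 * (K + 1)).
have h0 : 0 < h by rewrite divr_gt0 // mulr_gt0 // ltr_wpDl.
have Kh : K * h <= d / 2.
  have -> : K * h = d / 2 * (K / (K + 1)) by rewrite /h; field; lra.
  by apply: ler_piMr; [lra | rewrite ler_pdivrMr; lra].
pose eta := eps * (d / 2) * h.
have eta0 : 0 < eta by rewrite /eta; apply: mulr_gt0 => //; apply: mulr_gt0 => //; lra.
have [T [_ ET]] := (cvgrPdist_lt _ _).1 El (eta / 2) ltac:(lra).
exists (Num.max T 0); split; first by rewrite num_real.
move=> t; rewrite gt_max => /andP[Tt t0].
rewrite sub0r normrN ger0_norm ?f0 // ltNge; apply/negP => dft.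
have [c /andP[tc ct] EtE] := MVT_itvcy (ltW t0) (ltr_pwDr h0 (lexx t)) Ed Ec.
have fc2 : d / 2 <= f c.
  have [c' /andP[tc' _] ftf] := MVT_itvcy (ltW t0) tc fd fc.
  have c'0 : 0 < c' by lra.
  have : `|df c'| * (c - t) <= K * h by apply: ler_pM; [ | lra | exact: dfK | lra].
  have := dfK c' c'0; rewrite ler_norml => /andP[? ?].
  nra.
have : dE c * h <= - eta.
  rewrite /eta -mulNr ler_wpM2r ?(ltW h0) //; apply: le_trans (dEf c _) _; first lra.
  by rewrite lerN2 ler_wpM2l ?(ltW eps0).
have := ET t Tt; have := ET (t + h) ltac:(lra).
rewrite !ltr_norml addrAC subrr add0r in EtE * => /andP[? ?] /andP[? ?].
lra.
Qed.

End ScalarLyapunov.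

Lemma dissipated_cvg0 (R : realType) (n : nat) (E dE : R -> R) (u du : R -> 'rV[R]_n)
    (l eps B dB : R) : 0 < eps ->
  (forall t : R, 0 < t -> is_derive t 1 E (dE t)) -> {within `[0, +oo[, continuous E} ->
  (forall t : R, 0 < t -> dE t <= - (eps * sqnorm (u t))) -> E t @[t --> +oo] --> l ->
  (forall t : R, 0 < t -> is_derive t 1 u (du t)) -> {within `[0, +oo[, continuous u} ->
  (forall t : R, 0 < t -> `|u t| <= B /\ `|du t| <= dB) ->
  u t @[t --> +oo] --> (0 : 'rV[R]_n).
Proof.
move=> eps0 Ed Ec dEu El ud uc uB; apply: sqnorm_cvg0.
have B0 : 0 <= B by apply: le_trans (uB 1 ltr01).1.
have dB0 : 0 <= dB by apply: le_trans (uB 1 ltr01).2.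
apply: (@barbalat _ E dE _ (fun t => dotv (du t) (u t) + dotv (u t) (du t)) l eps
  (n%:R * (dB * B) + n%:R * (B * dB))) => //.
- by move=> t t0; exact: is_derive_dotv (ud t t0) (ud t t0).
- exact: within_continuous_dotv.
- move=> t t0; have [ut dut] := uB t t0.
  apply: le_trans (ler_normD _ _) _.
  by apply: lerD; apply: le_trans (dotv_norm_le _ _) _; rewrite ler_wpM2l // ler_pM.
- by move=> t _; exact: sqnorm_ge0.
Qed.

Section ZeroSet.
Variables (R : realType) (n : nat) (G : 'rV[R]_n -> 'rV[R]_n).

Lemma distS_ge0 (y w : 'rV[R]_n) : 0 <= distS G y w.
Proof.
rewrite /distS; set S := [set _ | _ in _].
have [[r Sr] | /forallNP S0] := pselect (exists r, S r).
  by apply: lb_le_inf; [exists r | move=> _ [z _ <-]; exact: sqrtr_ge0].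
by rewrite (_ : S = set0) ?inf0 //; apply/seteqP; split => r // /S0.
Qed.

Lemma distS_le (y w z : 'rV[R]_n) :
  G z = 0 -> distS G y w <= Num.sqrt (sqnorm (y - z) + sqnorm w).
Proof.
move=> Gz; apply: ge_inf; last by exists z.
by exists 0 => _ [u _ <-]; exact: sqrtr_ge0.
Qed.

(* Any cluster point at infinity of the bounded trajectory [x] is a zero of [G]. *)
Lemma zero_set_attracts (x : R -> 'rV[R]_n) (M r : R) : continuous G ->
  (forall t : R, 0 <= t -> `|x t| <= M) -> G (x t) @[t --> +oo] --> (0 : 'rV[R]_n) -> 0 < r ->
  \forall t \near +oo, exists2 y, G y = 0 & `|x t - y| < r.
Proof.
move=> Gc xM Gx0 r0; set P := fun t => exists2 y, G y = 0 & `|x t - y| < r.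
apply: contrapT => notP.
have notP_late (T : R) : exists t, T < t /\ ~ P t.
  apply: contrapT => hT; apply: notP; exists T; split; first by rewrite num_real.
  by move=> t Tt; apply: contrapT => nPt; apply: hT; exists t.
pose F := filter_from [set: R] (fun T => [set t | T < t /\ ~ P t]).
have FF : ProperFilter F.
  apply: filter_from_proper; last by move=> T _; have [t] := notP_late T; exists t.
  apply: filter_from_filter; first by exists 0.
  move=> T1 T2 _ _; exists (Num.max T1 T2) => // t [/=].
  by rewrite gt_max => /andP[? ?] ?; split.
pose K := [set y : 'rV[R]_n | forall i, `[- M, M]%classic (y ord0 i)].
have Kc : compact K.
  have Mc : compact (`[- M, M]%classic : set R) by exact: segment_compact.
  exact: rV_compact (fun i : 'I_n => Mc).
have xK : (x @ F) K.
  exists 0 => // t [t0 _] i /=; rewrite in_itv /= -ler_norml.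
  exact: le_trans (mx_entry_le_norm _ _ _) (xM t (ltW t0)).
have [p [_ p_cluster]] := Kc (x @ F) (fmap_proper_filter x FF) xK.
have Gp0 : G p = 0.
  apply: contrapT => /eqP Gp; have e0 : 0 < `|G p| / 2 by rewrite divr_gt0 ?normr_gt0.
  have [T [_ GxT]] := (cvgrPdist_lt _ _).1 Gx0 _ e0.
  have Gx_small : (x @ F) [set y | `|G y| < `|G p| / 2].
    by exists T => // t [Tt _] /=; have := GxT t Tt; rewrite sub0r normrN.
  have [y [/= Gy Gpy]] := p_cluster _ _ Gx_small ((cvgrPdist_lt _ _).1 (Gc p) _ e0).
  by have := ler_normD (G p - G y) (G y); rewrite subrK; lra.
have x_bad : (x @ F) [set y | exists2 t, ~ P t & x t = y].
  by exists 0 => // t [_ nPt]; exists t.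
have [_ [[t nPt <-]]] := p_cluster _ _ x_bad (nbhsx_ballx p r r0).
rewrite -ball_normE /= distrC => xtp.
by apply: nPt; exists p.
Qed.

Lemma distS_cvg0 (x v : R -> 'rV[R]_n) (M : R) : continuous G ->
  (forall t : R, 0 <= t -> `|x t| <= M) ->
  v t @[t --> +oo] --> (0 : 'rV[R]_n) -> G (x t) @[t --> +oo] --> (0 : 'rV[R]_n) ->
  distS G (x t) (v t) @[t --> +oo] --> 0.
Proof.
move=> Gc xM v0 Gx0; apply/cvgrPdist_lt => e e0.
pose r := e / (n%:R + 1).
have r0 : 0 < r by rewrite divr_gt0 // ltr_wpDl.
have re : r * (n%:R + 1) = e by rewrite /r divfK // lt0r_neq0 // ltr_wpDl.
near=> t; have [y Gy xy] : exists2 y, G y = 0 & `|x t - y| < r.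
  by near: t; exact: zero_set_attracts xM Gx0 r0.
have vt : `|v t| < r.
  by rewrite -normrN -sub0r; near: t; exact: (cvgrPdist_lt _ _).1 v0 _ r0.
rewrite sub0r normrN ger0_norm ?distS_ge0 //; apply: le_lt_trans (distS_le _ _ Gy) _.
rewrite -(ger0_norm (ltW e0)) -sqrtr_sqr ltr_sqrt ?exprn_gt0 //.
have := sqnorm_le (x t - y); have := sqnorm_le (v t).
have : `|x t - y| ^+ 2 <= r ^+ 2 by rewrite lerXn2r ?nnegrE ?(ltW r0) // ltW.
have : `|v t| ^+ 2 <= r ^+ 2 by rewrite lerXn2r ?nnegrE ?(ltW r0) // ltW.
have n0 : 0 <= n%:R :> R by [].
rewrite -re; nra.
Unshelve. all: by end_near. Qed.

End ZeroSet.

(* With [a = v], [b = grad Phi(x)] and [w = v + beta grad Phi(x)], the left-hand side is the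
   derivative of the energy [(1 + alpha beta) Phi(x) + |w|^2 / 2] along the flow. *)
Lemma energy_dissipation_identity (R : realType) (n : nat) (alpha beta : R) (a b : 'rV[R]_n) :
  let w := a + beta *: b in let dw := - (alpha *: a) - b in
  (1 + alpha * beta) * dotv a b + 2^-1 * (dotv dw w + dotv w dw) =
  - (alpha * sqnorm a + beta * sqnorm b).
Proof.
rewrite /sqnorm !(dotvDl, dotvDr, dotvBl, dotvBr, dotvNl, dotvNr, dotvZl, dotvZr).
by rewrite (dotvC b a); field.
Qed.

Section DampedHessianFlow.
Variables (R : realType) (n : nat) (Phi : 'rV[R]_n -> R) (G : 'rV[R]_n -> 'rV[R]_n)
  (H : 'rV[R]_n -> 'M[R]_n) (alpha beta : R) (x v : R -> 'rV[R]_n).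
Hypotheses (Phi_grad : is_gradient Phi G) (G_hess : is_hessian G H)
  (alpha_gt0 : 0 < alpha) (beta_gt0 : 0 < beta).
Hypothesis x_ode : forall t : R, 0 < t -> is_derive t 1 x (v t).
Hypothesis v_ode : forall t : R, 0 < t ->
  is_derive t 1 v (- (alpha *: v t) - G (x t) - beta *: (v t *m (H (x t))^T)).
Hypotheses (x_right0 : x @ at_right 0 --> x 0) (v_right0 : v @ at_right 0 --> v 0).

Let energy t := (1 + alpha * beta) * Phi (x t) + 2^-1 * sqnorm (v t + beta *: G (x t)).
Let dissipation t := alpha * sqnorm (v t) + beta * sqnorm (G (x t)).

Lemma is_derive_grad_traj (t : R) :
  0 < t -> is_derive t 1 (G \o x) (v t *m (H (x t))^T).
Proof.
by move=> t0; have := is_derive_comp_diff (x_ode t0) (G_hess (x t)).1; rewrite (G_hess _).2.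
Qed.

Lemma is_derive_energy (t : R) : 0 < t -> is_derive t 1 energy (- dissipation t).
Proof.
move=> t0.
have Phid : is_derive t 1 (Phi \o x) (dotv (v t) (G (x t))).
  by have := is_derive_comp_diff (x_ode t0) (Phi_grad (x t)).1; rewrite (Phi_grad _).2.
have wd : is_derive t 1 (fun s => v s + beta *: G (x s)) (- (alpha *: v t) - G (x t)).
  have := is_deriveD (v_ode t0) (is_deriveZ beta (is_derive_grad_traj t0)).
  by rewrite subrK.
have := is_deriveD (is_deriveZ (1 + alpha * beta) Phid)
  (is_deriveZ 2^-1 (is_derive_dotv wd wd)).
by rewrite /dissipation -energy_dissipation_identity.
Qed.

Let Gc : continuous G := fun y => differentiable_continuous (G_hess y).1.

Let xc := within_continuous_itvcy_of_derive x_ode x_right0.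
Let vc := within_continuous_itvcy_of_derive v_ode v_right0.
Let Gxc : {within `[0, +oo[, continuous (G \o x)}.
Proof. by move=> t; apply: cvg_comp (@xc t) (@Gc _). Qed.

Lemma within_continuous_energy : {within `[0, +oo[, continuous energy}.
Proof.
have Phic : continuous Phi := fun y => differentiable_continuous (Phi_grad y).1.
have wc : {within `[0, +oo[, continuous (fun s => v s + beta *: G (x s))}.
  by move=> t; apply: cvgD; [exact: @vc | apply: cvgZ; [exact: cvg_cst | exact: @Gxc]].
move=> t; apply: cvgD; apply: cvgM; try exact: cvg_cst.
  exact: cvg_comp (@xc t) (@Phic _).
exact: cvg_dotv (@wc t) (@wc t).
Qed.

Lemma within_continuous_dissipation : {within `[0, +oo[, continuous dissipation}.
Proof.
move=> t; apply: cvgD; apply: cvgM; try exact: cvg_cst.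
  exact: cvg_dotv (@vc t) (@vc t).
exact: cvg_dotv (@Gxc t) (@Gxc t).
Qed.

Lemma energy_nonincreasing (s t : R) : 0 <= s -> s <= t -> energy t <= energy s.
Proof.
move=> s0 st; apply: derive_le0_nonincreasing s0 st is_derive_energy _ within_continuous_energy.
by move=> u _; rewrite oppr_le0 addr_ge0 // mulr_ge0 ?sqnorm_ge0 ?(ltW alpha_gt0) ?(ltW beta_gt0).
Qed.

Variables (m M : R).
Hypotheses (Phi_ge : forall y, m <= Phi y) (H_lip : lipschitz_on_bounded H).
Hypothesis traj_bounded : forall t : R, 0 <= t -> enorm (x t) <= M /\ enorm (v t) <= M.

Let x_bounded (t : R) : 0 <= t -> `|x t| <= M.
Proof. by move=> t0; exact: le_trans (norm_le_enorm _) (traj_bounded t0).1. Qed.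

Let v_bounded (t : R) : 0 <= t -> `|v t| <= M.
Proof. by move=> t0; exact: le_trans (norm_le_enorm _) (traj_bounded t0).2. Qed.

Lemma energy_ge (t : R) : (1 + alpha * beta) * m <= energy t.
Proof.
have := sqnorm_ge0 (v t + beta *: G (x t)).
have := ler_wpM2l (ltW (ltr_pwDl ltr01 (ltW (mulr_gt0 alpha_gt0 beta_gt0)))) (Phi_ge (x t)).
rewrite /energy; lra.
Qed.

Lemma energy_cvg : exists l : R, energy t @[t --> +oo] --> l.
Proof.
by apply: (nonincreasing_bounded_cvg (m := (1 + alpha * beta) * m)) => [s t|t _];
  [exact: energy_nonincreasing | exact: energy_ge].
Qed.

(* The energy bounds [v + beta grad Phi(x)], hence [grad Phi(x)] since [v] is bounded. *)
Lemma grad_traj_bounded : exists B : R, forall t : R, 0 <= t -> `|G (x t)| <= B.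
Proof.
pose W := 2 * (energy 0 - (1 + alpha * beta) * m).
exists ((Num.sqrt W + M) / beta) => t t0.
have wW : `|v t + beta *: G (x t)| <= Num.sqrt W.
  apply: le_trans (norm_le_enorm _) _; rewrite ler_wsqrtr //.
  have := energy_nonincreasing (lexx 0) t0; have := energy_ge t.
  have := ler_wpM2l (ltW (ltr_pwDl ltr01 (ltW (mulr_gt0 alpha_gt0 beta_gt0)))) (Phi_ge (x t)).
  rewrite /W /energy; lra.
rewrite ler_pdivlMr // mulrC -(gtr0_norm beta_gt0) -normrZ.
have -> : beta *: G (x t) = (v t + beta *: G (x t)) - v t by rewrite addrC addKr.
by apply: le_trans (ler_normB _ _) _; rewrite lerD ?v_bounded.
Qed.

Lemma hessian_traj_bounded : exists B : R, forall t : R, 0 <= t -> `|H (x t)| <= B.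
Proof.
have [L HL] := H_lip M; exists (`|H 0| + `|L| * M) => t t0.
have enorm0 : enorm (0 : 'rV[R]_n) <= M.
  rewrite /enorm /sqnorm /dotv big1 ?sqrtr0 => [|i _]; last by rewrite mxE mul0r.
  exact: le_trans (enorm_ge0 _) (traj_bounded t0).1.
have := HL _ _ (traj_bounded t0).1 enorm0; rewrite subr0 => Hx.
have LxM : L * enorm (x t) <= `|L| * M.
  apply: le_trans (ler_norm _) _; rewrite normrM (ger0_norm (enorm_ge0 _)).
  by rewrite ler_wpM2l ?(traj_bounded t0).1.
have := ler_normD (H (x t) - H 0) (H 0); rewrite subrK; lra.
Qed.

Lemma grad_traj_derive_bounded :
  exists B : R, forall t : R, 0 <= t -> `|v t *m (H (x t))^T| <= B.
Proof.
have [B HB] := hessian_traj_bounded; exists (n%:R * (M * B)) => t t0.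
apply: le_trans (mulmx_trmx_norm_le _ _) _.
by rewrite ler_wpM2l // ler_pM ?v_bounded ?HB.
Qed.

Lemma accel_bounded : exists B : R, forall t : R, 0 <= t ->
  `|- (alpha *: v t) - G (x t) - beta *: (v t *m (H (x t))^T)| <= B.
Proof.
have [BG HBG] := grad_traj_bounded; have [BH HBH] := grad_traj_derive_bounded.
exists (alpha * M + BG + beta * BH) => t t0.
apply: le_trans (ler_normB _ _) _; apply: lerD; last first.
  by rewrite normrZ gtr0_norm // ler_wpM2l ?(ltW beta_gt0) ?HBH.
apply: le_trans (ler_normB _ _) _; apply: lerD; last exact: HBG.
by rewrite normrN normrZ gtr0_norm // ler_wpM2l ?(ltW alpha_gt0) ?v_bounded.
Qed.

Let Ec : energy @ 0^'+ --> energy 0.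
Proof. by have /continuous_within_itvcyP[] := within_continuous_energy. Qed.

Lemma vel_sq_integrable :
  (\int[lebesgue_measure]_(t in `[0%R, +oo[) (sqnorm (v t))%:E < +oo)%E.
Proof.
have [l El] := energy_cvg.
apply: (dissipation_integrable alpha_gt0 _ _ _ within_continuous_dissipation
  is_derive_energy Ec El) => [t _|t _|].
- exact: sqnorm_ge0.
- by rewrite lerDl mulr_ge0 ?sqnorm_ge0 ?(ltW beta_gt0).
- by move=> t; exact: cvg_dotv (@vc t) (@vc t).
Qed.

Lemma grad_sq_integrable :
  (\int[lebesgue_measure]_(t in `[0%R, +oo[) (sqnorm (G (x t)))%:E < +oo)%E.
Proof.
have [l El] := energy_cvg.
apply: (dissipation_integrable beta_gt0 _ _ _ within_continuous_dissipation
  is_derive_energy Ec El) => [t _|t _|].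
- exact: sqnorm_ge0.
- by rewrite lerDr mulr_ge0 ?sqnorm_ge0 ?(ltW alpha_gt0).
- by move=> t; exact: cvg_dotv (@Gxc t) (@Gxc t).
Qed.

Lemma vel_cvg0 : v t @[t --> +oo] --> (0 : 'rV[R]_n).
Proof.
have [l El] := energy_cvg; have [B HB] := accel_bounded.
apply: (dissipated_cvg0 alpha_gt0 is_derive_energy within_continuous_energy _ El v_ode vc).
  by move=> t _; rewrite lerN2 lerDl mulr_ge0 ?sqnorm_ge0 ?(ltW beta_gt0).
by move=> t t0; split; [exact: v_bounded (ltW t0) | exact: HB (ltW t0)].
Qed.

Lemma grad_cvg0 : G (x t) @[t --> +oo] --> (0 : 'rV[R]_n).
Proof.
have [l El] := energy_cvg; have [B HB] := grad_traj_bounded.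
have [dB HdB] := grad_traj_derive_bounded.
apply: (dissipated_cvg0 beta_gt0 is_derive_energy within_continuous_energy _ El
  is_derive_grad_traj Gxc).
  by move=> t _; rewrite lerN2 lerDr mulr_ge0 ?sqnorm_ge0 ?(ltW alpha_gt0).
by move=> t t0; split; [exact: HB (ltW t0) | exact: HdB (ltW t0)].
Qed.

Lemma phase_dist_cvg0 : distS G (x t) (v t) @[t --> +oo] --> 0.
Proof. exact: distS_cvg0 Gc x_bounded vel_cvg0 grad_cvg0. Qed.

End DampedHessianFlow.

Unset Implicit Arguments.

Theorem mainTheorem10 (R : realType) (n : nat)
  (Phi : 'rV[R]_n -> R) (G : 'rV[R]_n -> 'rV[R]_n) (H : 'rV[R]_n -> 'M[R]_n)
  (alpha beta : R) (x v : R -> 'rV[R]_n) :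
  is_gradient Phi G ->
  is_hessian G H ->
  continuous H ->
  (exists m : R, forall y, m <= Phi y) ->
  lipschitz_on_bounded H ->
  0 < alpha -> 0 < beta ->
  (forall t : R, 0 < t ->
     is_derive t 1 x (v t) /\
     is_derive t 1 v (- (alpha *: v t) - G (x t) - beta *: (v t *m (H (x t))^T))) ->
  x @ at_right 0 --> x 0 ->
  v @ at_right 0 --> v 0 ->
  (exists M : R, forall t : R, 0 <= t -> enorm (x t) <= M /\ enorm (v t) <= M) ->
  ((\int[lebesgue_measure]_(t in `[0%R, +oo[) (sqnorm (v t))%:E < +oo)%E /\
   (\int[lebesgue_measure]_(t in `[0%R, +oo[) (sqnorm (G (x t)))%:E < +oo)%E /\
   v t @[t --> +oo] --> (0:'rV[R]_n) /\
   G (x t) @[t --> +oo] --> (0:'rV[R]_n) /\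
   distS G (x t) (v t) @[t --> +oo] --> 0).
Proof.
(* [continuous H] is implied by [lipschitz_on_bounded H]. *)
move=> Phi_grad G_hess _ [m Phi_ge] H_lip alpha_gt0 beta_gt0 ode x0 v0 [M bounded].
have x_ode t (t0 : 0 < t) := (ode t t0).1.
have v_ode t (t0 : 0 < t) := (ode t t0).2.
split; first exact: (vel_sq_integrable Phi_grad G_hess alpha_gt0 beta_gt0 x_ode v_ode
  x0 v0 Phi_ge).
split; first exact: (grad_sq_integrable Phi_grad G_hess alpha_gt0 beta_gt0 x_ode v_ode
  x0 v0 Phi_ge).
split; first exact: (vel_cvg0 Phi_grad G_hess alpha_gt0 beta_gt0 x_ode v_ode
  x0 v0 Phi_ge H_lip bounded).
split; first exact: (grad_cvg0 Phi_grad G_hess alpha_gt0 beta_gt0 x_ode v_ode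
  x0 v0 Phi_ge H_lip bounded).
exact: (phase_dist_cvg0 Phi_grad G_hess alpha_gt0 beta_gt0 x_ode v_ode
  x0 v0 Phi_ge H_lip bounded).
Qed.
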